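(* Let $(s_n)_{n\in\mathbb{Z}}$, $(t_n)_{n\in\mathbb{Z}}$ be strictly increasing sequences of reals with $\lim_{n\to-\infty}s_n=0$, $\lim_{n\to+\infty}s_n=\lim_{n\to-\infty}t_n=1$, $\lim_{n\to+\infty}t_n=2$, and let $X=\{0,1,2\}\cup\{s_n:n\in\mathbb{Z}\}\cup\{t_n:n\in\mathbb{Z}\}\subset[0,2]$ with the usual metric. Define $f\colon X\to X$ by $f(y)=y$ for $y\in\{0,1,2\}$, $f(s_n)=s_{n+1}$, $f(t_n)=t_{n+1}$. Then $f$ is an expansive homeomorphism which has the limit shadowing property but not the shadowing property.
   Context: A homeomorphism $f$ is expansive if there is $e>0$ such that $d(f^n(x),f^n(y))\le e$ for all $n\in\mathbb{Z}$ implies $x=y$. Shadowing property: for every $\epsilon>0$ there is $\delta>0$ such that every sequence $(x_i)_{i\ge0}$ with $d(f(x_i),x_{i+1})\le\delta$ for all $i$ admits $x$ with $d(x_i,f^i(x))\le\epsilon$ for all $i$. Limit shadowing property: every sequence with $\lim_i d(f(x_i),x_{i+1})=0$ admits $y$ with $\lim_i d(x_i,f^i(y))=0$. *)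

From Stdlib Require Import Reals ZArith.
Open Scope R_scope.

Definition lim_Zplus (s : Z -> R) (l : R) : Prop :=
  forall eps, eps > 0 -> exists N : Z, forall n : Z, (N <= n)%Z -> Rabs (s n - l) < eps.
Definition lim_Zminus (s : Z -> R) (l : R) : Prop :=
  forall eps, eps > 0 -> exists N : Z, forall n : Z, (n <= N)%Z -> Rabs (s n - l) < eps.

Definition strictly_increasing_Z (s : Z -> R) : Prop :=
  forall m n : Z, (m < n)%Z -> s m < s n.

Definition Xset (s t : Z -> R) (y : R) : Prop :=
  y = 0 \/ y = 1 \/ y = 2 \/ (exists n : Z, y = s n) \/ (exists n : Z, y = t n).

Definition is_homeomorphism_on (X : R -> Prop) (f : R -> R) : Prop :=
  (forall x, X x -> X (f x)) /\
  (forall x y, X x -> X y -> f x = f y -> x = y) /\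
  (forall y, X y -> exists x, X x /\ f x = y) /\
  (forall x, X x -> forall eps, eps > 0 -> exists delta, delta > 0 /\
     forall z, X z -> Rabs (z - x) < delta -> Rabs (f z - f x) < eps) /\
  (* continuity of f^{-1} on X, at the point f x *)
  (forall x, X x -> forall eps, eps > 0 -> exists delta, delta > 0 /\
     forall z, X z -> Rabs (f z - f x) < delta -> Rabs (z - x) < eps).

(* u is the full (Z-indexed) f-orbit of u 0 in X: u n = f^n (u 0) for all n in Z
   (for a bijection f of X this orbit is unique). *)
Definition Z_orbit (X : R -> Prop) (f : R -> R) (u : Z -> R) : Prop :=
  forall n : Z, X (u n) /\ u (n + 1)%Z = f (u n).

Definition expansive_on (X : R -> Prop) (f : R -> R) : Prop :=
  exists e, e > 0 /\
    forall u v : Z -> R, Z_orbit X f u -> Z_orbit X f v ->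
      (forall n : Z, Rabs (u n - v n) <= e) -> u 0%Z = v 0%Z.

Definition shadowing_on (X : R -> Prop) (f : R -> R) : Prop :=
  forall eps, eps > 0 -> exists delta, delta > 0 /\
    forall x : nat -> R, (forall i, X (x i)) ->
      (forall i, Rabs (f (x i) - x (S i)) <= delta) ->
      exists y, X y /\ forall i, Rabs (x i - Nat.iter i f y) <= eps.

Definition limit_shadowing_on (X : R -> Prop) (f : R -> R) : Prop :=
  forall x : nat -> R, (forall i, X (x i)) ->
    Un_cv (fun i => Rabs (f (x i) - x (S i))) 0 ->
    exists y, X y /\ Un_cv (fun i => Rabs (x i - Nat.iter i f y)) 0.

(* Apart from 0, 1 and 2 every point of X is isolated, and f moves each point of X weakly
   upwards along one of the two ladders s and t.  Hence f and its inverse are continuous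
   at the isolated points trivially and at 0, 1, 2 by the limits of s and t.  Two distinct
   orbits differ in their limits at -oo or +oo, or are two shifts of the same ladder and
   then differ somewhere by at least s 1 - s 0 (resp. t 1 - t 0): this is expansivity.
   A pseudo-orbit with errors tending to 0 eventually cannot jump down across a rung of a
   ladder, so once it is above some s n (t n) it is eventually above every s m (t m); it
   therefore converges to 0, 1 or 2 and is asymptotic to that fixed point.  Shadowing
   fails since a delta-pseudo-orbit may climb s up to near 1, jump over to t and climb to
   2, while a true orbit starting below 1/2 stays below 1. *)

From Stdlib Require Import Reals ZArith Lra Lia Classical.
Open Scope R_scope.

Ltac Rabs_lra :=
  unfold Rabs in *;
  repeat match goal with
  | |- context [Rcase_abs ?x] => destruct (Rcase_abs x)
  | H : context [Rcase_abs ?x] |- _ => destruct (Rcase_abs x)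
  end; lra.

Section StrictlyIncreasing.

Variable q : Z -> R.
Hypothesis q_inc : strictly_increasing_Z q.

Lemma strictly_increasing_le m n : (m <= n)%Z -> q m <= q n.
Proof.
  intros Hmn; destruct (Z.eq_dec m n) as [-> | Hne]; [lra |].
  left; apply q_inc; lia.
Qed.

Lemma strictly_increasing_lt_rev m n : q m < q n -> (m < n)%Z.
Proof.
  intros Hq; destruct (Z_lt_le_dec m n) as [| Hnm]; [assumption |].
  pose proof (strictly_increasing_le n m Hnm); lra.
Qed.

Lemma strictly_increasing_inj m n : q m = q n -> m = n.
Proof.
  intros Hq; destruct (Z.lt_total m n) as [Hl | [Hl | Hl]]; [| assumption |];
    pose proof (q_inc _ _ Hl); lra.
Qed.

Lemma lt_lim_Zplus b n : lim_Zplus q b -> q n < b.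
Proof.
  intros Hb; apply Rnot_le_lt; intros Hn.
  assert (Hgap : q (n + 1)%Z - q n > 0) by (pose proof (q_inc n (n + 1)%Z ltac:(lia)); lra).
  destruct (Hb _ Hgap) as [N HN].
  specialize (HN (Z.max N (n + 1))%Z ltac:(lia)).
  pose proof (strictly_increasing_le (n + 1)%Z (Z.max N (n + 1)) ltac:(lia)); Rabs_lra.
Qed.

Lemma lim_Zminus_lt a n : lim_Zminus q a -> a < q n.
Proof.
  intros Ha; apply Rnot_le_lt; intros Hn.
  assert (Hgap : q n - q (n - 1)%Z > 0) by (pose proof (q_inc (n - 1)%Z n ltac:(lia)); lra).
  destruct (Ha _ Hgap) as [N HN].
  specialize (HN (Z.min N (n - 1))%Z ltac:(lia)).
  pose proof (strictly_increasing_le (Z.min N (n - 1)) (n - 1)%Z ltac:(lia)); Rabs_lra.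
Qed.

Lemma lim_Zplus_tail b k eps : lim_Zplus q b -> eps > 0 ->
  exists c, c < b /\ forall n, c < q n -> Rabs (q (n + k) - b) < eps.
Proof.
  intros Hb Heps; destruct (Hb eps Heps) as [N HN].
  exists (q (N - k)%Z); split; [now apply lt_lim_Zplus |].
  intros n Hn; apply HN; apply strictly_increasing_lt_rev in Hn; lia.
Qed.

Lemma lim_Zminus_tail a k eps : lim_Zminus q a -> eps > 0 ->
  exists c, a < c /\ forall n, q n < c -> Rabs (q (n + k) - a) < eps.
Proof.
  intros Ha Heps; destruct (Ha eps Heps) as [N HN].
  exists (q (N - k)%Z); split; [now apply lim_Zminus_lt |].
  intros n Hn; apply HN; apply strictly_increasing_lt_rev in Hn; lia.
Qed.

Lemma isolated_term (P : R -> Prop) m y :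
  (forall n z, P z -> q n < z -> q (n + 1)%Z <= z) -> P y ->
  Rabs (y - q m) < Rmin (q (m + 1)%Z - q m) (q m - q (m - 1)%Z) -> y = q m.
Proof.
  intros Hgap Hy Hd.
  pose proof (Rmin_l (q (m + 1)%Z - q m) (q m - q (m - 1)%Z)).
  pose proof (Rmin_r (q (m + 1)%Z - q m) (q m - q (m - 1)%Z)).
  assert (Hge : q m <= y).
  { replace m with (m - 1 + 1)%Z at 1 by lia; apply (Hgap _ _ Hy); Rabs_lra. }
  destruct Hge as [Hlt | ->]; [| reflexivity].
  pose proof (Hgap _ _ Hy Hlt); Rabs_lra.
Qed.

Lemma shifts_close_eq e k k' : e < q 1%Z - q 0%Z ->
  (forall n, Rabs (q (k + n)%Z - q (k' + n)%Z) <= e) -> k = k'.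
Proof.
  intros He Hclose; destruct (Z.lt_total k k') as [Hl | [Hl | Hl]]; [| assumption |]; exfalso.
  - specialize (Hclose (- k)%Z); rewrite Z.add_opp_diag_r in Hclose.
    pose proof (strictly_increasing_le 1 (k' + - k) ltac:(lia)); Rabs_lra.
  - specialize (Hclose (- k')%Z); rewrite Z.add_opp_diag_r in Hclose.
    pose proof (strictly_increasing_le 1 (k + - k') ltac:(lia)); Rabs_lra.
Qed.

End StrictlyIncreasing.

Lemma lim_Zplus_const u c : (forall n, u n = c) -> lim_Zplus u c.
Proof. intros Hu eps Heps; exists 0%Z; intros n _; rewrite Hu; Rabs_lra. Qed.

Lemma lim_Zminus_const u c : (forall n, u n = c) -> lim_Zminus u c.
Proof. intros Hu eps Heps; exists 0%Z; intros n _; rewrite Hu; Rabs_lra. Qed.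

Lemma lim_Zplus_shift u q b k : (forall n, u n = q (k + n)%Z) -> lim_Zplus q b -> lim_Zplus u b.
Proof.
  intros Hu Hq eps Heps; destruct (Hq eps Heps) as [N HN].
  exists (N - k)%Z; intros n Hn; rewrite Hu; apply HN; lia.
Qed.

Lemma lim_Zminus_shift u q a k : (forall n, u n = q (k + n)%Z) -> lim_Zminus q a -> lim_Zminus u a.
Proof.
  intros Hu Hq eps Heps; destruct (Hq eps Heps) as [N HN].
  exists (N - k)%Z; intros n Hn; rewrite Hu; apply HN; lia.
Qed.

Lemma lim_Zplus_close u v a b e : lim_Zplus u a -> lim_Zplus v b ->
  (forall n, Rabs (u n - v n) <= e) -> Rabs (a - b) <= e.
Proof.
  intros Hu Hv Huv; apply Rle_plus_epsilon; intros d Hd.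
  destruct (Hu (d / 2) ltac:(lra)) as [N1 H1]; destruct (Hv (d / 2) ltac:(lra)) as [N2 H2].
  specialize (H1 (Z.max N1 N2) ltac:(lia)); specialize (H2 (Z.max N1 N2) ltac:(lia)).
  specialize (Huv (Z.max N1 N2)); Rabs_lra.
Qed.

Lemma lim_Zminus_close u v a b e : lim_Zminus u a -> lim_Zminus v b ->
  (forall n, Rabs (u n - v n) <= e) -> Rabs (a - b) <= e.
Proof.
  intros Hu Hv Huv; apply Rle_plus_epsilon; intros d Hd.
  destruct (Hu (d / 2) ltac:(lra)) as [N1 H1]; destruct (Hv (d / 2) ltac:(lra)) as [N2 H2].
  specialize (H1 (Z.min N1 N2) ltac:(lia)); specialize (H2 (Z.min N1 N2) ltac:(lia)).
  specialize (Huv (Z.min N1 N2)); Rabs_lra.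
Qed.

Lemma Z_orbit_unique (X : R -> Prop) (f : R -> R) u v :
  (forall x y, X x -> X y -> f x = f y -> x = y) ->
  Z_orbit X f u -> Z_orbit X f v -> u 0%Z = v 0%Z -> forall n, u n = v n.
Proof.
  intros f_inj Hu Hv H0; apply Z.peano_ind; [assumption | |].
  - intros n IH; rewrite <- Z.add_1_r, (proj2 (Hu n)), (proj2 (Hv n)), IH; reflexivity.
  - intros n IH; apply f_inj; [apply Hu | apply Hv |].
    rewrite <- (proj2 (Hu (Z.pred n))), <- (proj2 (Hv (Z.pred n))).
    now rewrite Z.add_1_r, Z.succ_pred.
Qed.

Definition eventually (P : nat -> Prop) : Prop := exists N, forall i, (N <= i)%nat -> P i.

Lemma eventually_invariant_dichotomy (P : nat -> Prop) :
  eventually (fun i => P i -> P (S i)) -> eventually P \/ eventually (fun i => ~ P i).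
Proof.
  intros [N HN]; destruct (classic (exists i, (N <= i)%nat /\ P i)) as [[i [Hi HPi]] | Hnone].
  - left; exists i; intros j Hj; induction Hj as [| j Hj IH]; [assumption |].
    apply HN; [lia | assumption].
  - right; exists N; intros i Hi HPi; apply Hnone; eauto.
Qed.

Lemma fixed_point_limit_shadows (f : R -> R) (x : nat -> R) c : f c = c ->
  Un_cv x c -> Un_cv (fun i => Rabs (x i - Nat.iter i f c)) 0.
Proof.
  intros Hc Hx eps Heps; destruct (Hx eps Heps) as [N HN]; exists N; intros i Hi.
  assert (Hiter : forall j, Nat.iter j f c = c) by (induction j; simpl; congruence).
  unfold R_dist in *; rewrite Hiter, Rminus_0_r, Rabs_Rabsolu; auto.
Qed.

Section Ladder.

Variables (X : R -> Prop) (f : R -> R) (x : nat -> R) (q : Z -> R).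
Hypotheses (x_in : forall i, X (x i))
  (x_pseudo : Un_cv (fun i => Rabs (f (x i) - x (S i))) 0)
  (q_inc : strictly_increasing_Z q)
  (q_gap : forall n y, X y -> q n < y -> q (n + 1)%Z <= y)
  (f_climbs : forall n y, X y -> q n <= y -> q (n + 1)%Z <= f y).

Lemma pseudo_orbit_climbs n : eventually (fun i => q n <= x i -> q (n + 1)%Z <= x (S i)).
Proof.
  pose proof (q_inc n (n + 1)%Z ltac:(lia)) as Hstep.
  destruct (x_pseudo (q (n + 1)%Z - q n) ltac:(lra)) as [M HM].
  exists M; intros i Hi Hxi; specialize (HM i Hi).
  unfold R_dist in HM; rewrite Rminus_0_r, Rabs_Rabsolu in HM.
  pose proof (f_climbs n (x i) (x_in i) Hxi).
  apply q_gap; [apply x_in | Rabs_lra].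
Qed.

Lemma eventually_above_or_below n :
  eventually (fun i => q n <= x i) \/ eventually (fun i => x i < q n).
Proof.
  assert (Hinv : eventually (fun i => q n <= x i -> q n <= x (S i))).
  { destruct (pseudo_orbit_climbs n) as [N HN]; exists N; intros i Hi Hxi.
    pose proof (q_inc n (n + 1)%Z ltac:(lia)); pose proof (HN i Hi Hxi); lra. }
  destruct (eventually_invariant_dichotomy _ Hinv) as [Habove | [N HN]]; [now left |].
  right; exists N; intros i Hi; apply Rnot_le_lt, HN, Hi.
Qed.

Lemma eventually_above_all n m :
  eventually (fun i => q n <= x i) -> eventually (fun i => q m <= x i).
Proof.
  intros Hn; destruct (Z_le_gt_dec m n) as [Hmn | Hmn].
  - destruct Hn as [N HN]; exists N; intros i Hi.
    pose proof (strictly_increasing_le q q_inc m n Hmn); pose proof (HN i Hi); lra.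
  - replace m with (n + Z.of_nat (Z.to_nat (m - n)))%Z by lia.
    induction (Z.to_nat (m - n)) as [| j [N HN]]; [now rewrite Z.add_0_r |].
    destruct (pseudo_orbit_climbs (n + Z.of_nat j)) as [M HM].
    exists (S (Nat.max N M)); intros [| i] Hi; [lia |].
    rewrite Nat2Z.inj_succ, <- Z.add_1_r, Z.add_assoc; apply HM; [lia | apply HN; lia].
Qed.

End Ladder.

Section Space.

Variables (s t : Z -> R) (f : R -> R).
Hypotheses (s_inc : strictly_increasing_Z s) (t_inc : strictly_increasing_Z t)
  (s_lim0 : lim_Zminus s 0) (s_lim1 : lim_Zplus s 1)
  (t_lim1 : lim_Zminus t 1) (t_lim2 : lim_Zplus t 2)
  (f0 : f 0 = 0) (f1 : f 1 = 1) (f2 : f 2 = 2)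
  (f_s : forall n, f (s n) = s (n + 1)%Z) (f_t : forall n, f (t n) = t (n + 1)%Z).

Notation X := (Xset s t).

Lemma s_bounds n : 0 < s n < 1.
Proof. split; [apply lim_Zminus_lt | apply lt_lim_Zplus]; assumption. Qed.

Lemma t_bounds n : 1 < t n < 2.
Proof. split; [apply lim_Zminus_lt | apply lt_lim_Zplus]; assumption. Qed.

Lemma Xset_bounds y : X y -> 0 <= y <= 2.
Proof.
  intros [-> | [-> | [-> | [[m ->] | [m ->]]]]]; try lra;
    [pose proof (s_bounds m) | pose proof (t_bounds m)]; lra.
Qed.

Lemma Xset_s_gap n y : X y -> s n < y -> s (n + 1)%Z <= y.
Proof.
  pose proof (s_bounds n); pose proof (s_bounds (n + 1)).
  intros [-> | [-> | [-> | [[m ->] | [m ->]]]]] Hy; try lra.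
  - apply strictly_increasing_lt_rev in Hy; [| assumption].
    apply strictly_increasing_le; [assumption | lia].
  - pose proof (t_bounds m); lra.
Qed.

Lemma Xset_t_gap n y : X y -> t n < y -> t (n + 1)%Z <= y.
Proof.
  pose proof (t_bounds n); pose proof (t_bounds (n + 1)).
  intros [-> | [-> | [-> | [[m ->] | [m ->]]]]] Hy; try lra.
  - pose proof (s_bounds m); lra.
  - apply strictly_increasing_lt_rev in Hy; [| assumption].
    apply strictly_increasing_le; [assumption | lia].
Qed.

Lemma f_Xset y : X y -> X (f y).
Proof.
  intros [-> | [-> | [-> | [[m ->] | [m ->]]]]]; unfold Xset;
    rewrite ?f0, ?f1, ?f2, ?f_s, ?f_t; eauto 7.
Qed.

Lemma f_ge y : X y -> y <= f y.
Proof.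
  intros [-> | [-> | [-> | [[m ->] | [m ->]]]]]; rewrite ?f0, ?f1, ?f2, ?f_s, ?f_t; try lra;
    left; [apply s_inc | apply t_inc]; lia.
Qed.

Ltac pose_bounds e :=
  match e with
  | s ?k => pose proof (s_bounds k)
  | t ?k => pose proof (t_bounds k)
  | _ => idtac
  end.

Lemma f_injective y z : X y -> X z -> f y = f z -> y = z.
Proof.
  intros Hy Hz.
  destruct Hy as [-> | [-> | [-> | [[m ->] | [m ->]]]]];
  destruct Hz as [-> | [-> | [-> | [[n ->] | [n ->]]]]];
  rewrite ?f0, ?f1, ?f2, ?f_s, ?f_t; intros Heq; try reflexivity;
  try (apply strictly_increasing_inj in Heq; [f_equal; lia | assumption]);
  match type of Heq with ?l = ?r => pose_bounds l; pose_bounds r end; lra.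
Qed.

Lemma f_surjective y : X y -> exists x, X x /\ f x = y.
Proof.
  intros [-> | [-> | [-> | [[m ->] | [m ->]]]]].
  - exists 0; split; [left |]; auto.
  - exists 1; split; [right; left |]; auto.
  - exists 2; split; [right; right; left |]; auto.
  - exists (s (m - 1)%Z); split; [do 3 right; left; eauto | rewrite f_s; f_equal; lia].
  - exists (t (m - 1)%Z); split; [do 4 right; eauto | rewrite f_t; f_equal; lia].
Qed.

(* For [k = 1] this is the graph of [f] on [X], for [k = -1] that of its inverse,
   so that one continuity argument serves for both. *)
Definition shift_rel (k : Z) (y y' : R) : Prop :=
  ((y = 0 \/ y = 1 \/ y = 2) /\ y' = y) \/
  (exists n, y = s n /\ y' = s (n + k)%Z) \/ (exists n, y = t n /\ y' = t (n + k)%Z).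

Lemma shift_rel_Xset k y y' : shift_rel k y y' -> X y.
Proof. unfold Xset; intros [[Hy _] | [[n [-> _]] | [n [-> _]]]]; intuition eauto. Qed.

Lemma shift_rel_f y : X y -> shift_rel 1 y (f y).
Proof.
  intros [-> | [-> | [-> | [[m ->] | [m ->]]]]]; unfold shift_rel;
    rewrite ?f0, ?f1, ?f2, ?f_s, ?f_t; eauto 6.
Qed.

Lemma shift_rel_opp k y y' : shift_rel k y y' -> shift_rel (- k) y' y.
Proof.
  intros [[Hy ->] | [[n [-> ->]] | [n [-> ->]]]]; [left; auto | right; left | right; right];
    exists (n + k)%Z; split; [reflexivity | f_equal; lia | reflexivity | f_equal; lia].
Qed.

Lemma shift_rel_s k m y' : shift_rel k (s m) y' -> y' = s (m + k)%Z.
Proof.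
  pose proof (s_bounds m).
  intros [[Hy _] | [[n [Hn ->]] | [n [Hn ->]]]];
    [lra | now rewrite (strictly_increasing_inj s s_inc n m) |].
  pose proof (t_bounds n); lra.
Qed.

Lemma shift_rel_t k m y' : shift_rel k (t m) y' -> y' = t (m + k)%Z.
Proof.
  pose proof (t_bounds m).
  intros [[Hy _] | [[n [Hn ->]] | [n [Hn ->]]]];
    [lra | | now rewrite (strictly_increasing_inj t t_inc n m)].
  pose proof (s_bounds n); lra.
Qed.

Lemma shift_rel_continuous k x x' : shift_rel k x x' ->
  forall eps, eps > 0 -> exists delta, delta > 0 /\
    forall z z', shift_rel k z z' -> Rabs (z - x) < delta -> Rabs (z' - x') < eps.
Proof.
  intros Hx eps Heps.
  destruct Hx as [[[-> | [-> | ->]] ->] | [[m [-> ->]] | [m [-> ->]]]].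
  - destruct (lim_Zminus_tail s s_inc 0 k eps s_lim0 Heps) as [c [Hc Hs]].
    exists (Rmin c 1); split; [apply Rmin_glb_lt; lra |].
    pose proof (Rmin_l c 1); pose proof (Rmin_r c 1).
    intros z z' [[[-> | [-> | ->]] ->] | [[n [-> ->]] | [n [-> ->]]]] Hz; try Rabs_lra.
    + apply Hs; pose proof (s_bounds n); Rabs_lra.
    + pose proof (t_bounds n); Rabs_lra.
  - destruct (lim_Zplus_tail s s_inc 1 k eps s_lim1 Heps) as [c1 [Hc1 Hs]].
    destruct (lim_Zminus_tail t t_inc 1 k eps t_lim1 Heps) as [c2 [Hc2 Ht]].
    set (delta := Rmin (Rmin (1 - c1) (c2 - 1)) 1).
    exists delta; split; [unfold delta; repeat apply Rmin_glb_lt; lra |].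
    assert (Hdelta : delta <= 1 - c1 /\ delta <= c2 - 1 /\ delta <= 1).
    { unfold delta; pose proof (Rmin_l (Rmin (1 - c1) (c2 - 1)) 1);
        pose proof (Rmin_r (Rmin (1 - c1) (c2 - 1)) 1);
        pose proof (Rmin_l (1 - c1) (c2 - 1)); pose proof (Rmin_r (1 - c1) (c2 - 1)); lra. }
    intros z z' [[[-> | [-> | ->]] ->] | [[n [-> ->]] | [n [-> ->]]]] Hz; try Rabs_lra.
    + apply Hs; Rabs_lra.
    + apply Ht; Rabs_lra.
  - destruct (lim_Zplus_tail t t_inc 2 k eps t_lim2 Heps) as [c [Hc Ht]].
    exists (Rmin (2 - c) 1); split; [apply Rmin_glb_lt; lra |].
    pose proof (Rmin_l (2 - c) 1); pose proof (Rmin_r (2 - c) 1).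
    intros z z' [[[-> | [-> | ->]] ->] | [[n [-> ->]] | [n [-> ->]]]] Hz; try Rabs_lra.
    + pose proof (s_bounds n); Rabs_lra.
    + apply Ht; Rabs_lra.
  - exists (Rmin (s (m + 1)%Z - s m) (s m - s (m - 1)%Z)); split.
    { pose proof (s_inc m (m + 1)%Z ltac:(lia)); pose proof (s_inc (m - 1)%Z m ltac:(lia)).
      apply Rmin_glb_lt; lra. }
    intros z z' Hzz' Hz.
    rewrite (isolated_term s X m z Xset_s_gap (shift_rel_Xset _ _ _ Hzz') Hz) in Hzz'.
    rewrite (shift_rel_s _ _ _ Hzz'); Rabs_lra.
  - exists (Rmin (t (m + 1)%Z - t m) (t m - t (m - 1)%Z)); split.
    { pose proof (t_inc m (m + 1)%Z ltac:(lia)); pose proof (t_inc (m - 1)%Z m ltac:(lia)).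
      apply Rmin_glb_lt; lra. }
    intros z z' Hzz' Hz.
    rewrite (isolated_term t X m z Xset_t_gap (shift_rel_Xset _ _ _ Hzz') Hz) in Hzz'.
    rewrite (shift_rel_t _ _ _ Hzz'); Rabs_lra.
Qed.

Lemma Xset_homeomorphism : is_homeomorphism_on X f.
Proof.
  split; [exact f_Xset | split; [exact f_injective | split; [exact f_surjective | split]]].
  - intros x Hx eps Heps.
    destruct (shift_rel_continuous 1 x (f x) (shift_rel_f x Hx) eps Heps) as [delta [Hd Hc]].
    exists delta; split; [assumption |].
    intros z Hz; apply Hc, shift_rel_f, Hz.
  - intros x Hx eps Heps.
    destruct (shift_rel_continuous (-1) (f x) x (shift_rel_opp _ _ _ (shift_rel_f x Hx)) eps Heps)
      as [delta [Hd Hc]].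
    exists delta; split; [assumption |].
    intros z Hz; apply Hc; exact (shift_rel_opp 1 _ _ (shift_rel_f z Hz)).
Qed.

Lemma Z_orbit_ends u : Z_orbit X f u -> exists a b, lim_Zminus u a /\ lim_Zplus u b /\
  ((a = b /\ (a = 0 \/ a = 1 \/ a = 2) /\ forall n, u n = a) \/
   (a = 0 /\ b = 1 /\ exists k, forall n, u n = s (k + n)%Z) \/
   (a = 1 /\ b = 2 /\ exists k, forall n, u n = t (k + n)%Z)).
Proof.
  intros Hu.
  assert (Hconst : forall c, f c = c -> X c -> u 0%Z = c -> forall n, u n = c).
  { intros c Hfc Hc H0; apply (Z_orbit_unique X f u (fun _ => c) f_injective Hu);
      [intros n; split |]; auto. }
  assert (Hs : forall m, u 0%Z = s m -> forall n, u n = s (m + n)%Z).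
  { intros m H0; apply (Z_orbit_unique X f u _ f_injective Hu).
    - intros n; split; [do 3 right; left; eauto | rewrite f_s; f_equal; lia].
    - rewrite Z.add_0_r; assumption. }
  assert (Ht : forall m, u 0%Z = t m -> forall n, u n = t (m + n)%Z).
  { intros m H0; apply (Z_orbit_unique X f u _ f_injective Hu).
    - intros n; split; [do 4 right; eauto | rewrite f_t; f_equal; lia].
    - rewrite Z.add_0_r; assumption. }
  destruct (proj1 (Hu 0%Z)) as [H0 | [H0 | [H0 | [[m H0] | [m H0]]]]].
  - pose proof (Hconst 0 f0 ltac:(left; reflexivity) H0) as E.
    exists 0, 0; split; [apply lim_Zminus_const, E |].
    split; [apply lim_Zplus_const, E | left; intuition].
  - pose proof (Hconst 1 f1 ltac:(right; left; reflexivity) H0) as E.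
    exists 1, 1; split; [apply lim_Zminus_const, E |].
    split; [apply lim_Zplus_const, E | left; intuition].
  - pose proof (Hconst 2 f2 ltac:(right; right; left; reflexivity) H0) as E.
    exists 2, 2; split; [apply lim_Zminus_const, E |].
    split; [apply lim_Zplus_const, E | left; intuition].
  - exists 0, 1; split; [apply (lim_Zminus_shift u s 0 m (Hs m H0) s_lim0) |].
    split; [apply (lim_Zplus_shift u s 1 m (Hs m H0) s_lim1) | right; left; repeat split; eauto].
  - exists 1, 2; split; [apply (lim_Zminus_shift u t 1 m (Ht m H0) t_lim1) |].
    split; [apply (lim_Zplus_shift u t 2 m (Ht m H0) t_lim2) | right; right; repeat split; eauto].
Qed.
Lemma Xset_expansive : expansive_on X f.
Proof.
  pose proof (s_inc 0%Z 1%Z ltac:(lia)); pose proof (t_inc 0%Z 1%Z ltac:(lia)).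
  set (e := Rmin (1 / 2) (Rmin (s 1%Z - s 0%Z) (t 1%Z - t 0%Z)) / 2).
  assert (He : 0 < e /\ e < 1 / 2 /\ e < s 1%Z - s 0%Z /\ e < t 1%Z - t 0%Z).
  { unfold e; pose proof (Rmin_l (1 / 2) (Rmin (s 1%Z - s 0%Z) (t 1%Z - t 0%Z)));
      pose proof (Rmin_r (1 / 2) (Rmin (s 1%Z - s 0%Z) (t 1%Z - t 0%Z)));
      pose proof (Rmin_l (s 1%Z - s 0%Z) (t 1%Z - t 0%Z));
      pose proof (Rmin_r (s 1%Z - s 0%Z) (t 1%Z - t 0%Z)).
    assert (0 < Rmin (1 / 2) (Rmin (s 1%Z - s 0%Z) (t 1%Z - t 0%Z)))
      by (repeat apply Rmin_glb_lt; lra).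
    lra. }
  clearbody e; exists e; split; [lra |].
  intros u v Hu Hv Huv.
  destruct (Z_orbit_ends u Hu) as (a & b & Ha & Hb & Ku).
  destruct (Z_orbit_ends v Hv) as (a' & b' & Ha' & Hb' & Kv).
  pose proof (lim_Zminus_close u v a a' e Ha Ha' Huv).
  pose proof (lim_Zplus_close u v b b' e Hb Hb' Huv).
  destruct Ku as [(-> & Hc & Eu) | [(-> & -> & k & Eu) | (-> & -> & k & Eu)]];
  destruct Kv as [(-> & Hc' & Ev) | [(-> & -> & k' & Ev) | (-> & -> & k' & Ev)]];
  try Rabs_lra.
  - rewrite Eu, Ev; destruct Hc as [-> | [-> | ->]]; destruct Hc' as [-> | [-> | ->]];
      Rabs_lra.
  - rewrite Eu, Ev; replace k' with k; [reflexivity |].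
    apply (shifts_close_eq s s_inc e); [lra |]; intros n; rewrite <- Eu, <- Ev; apply Huv.
  - rewrite Eu, Ev; replace k' with k; [reflexivity |].
    apply (shifts_close_eq t t_inc e); [lra |]; intros n; rewrite <- Eu, <- Ev; apply Huv.
Qed.

Lemma f_climbs_s n y : X y -> s n <= y -> s (n + 1)%Z <= f y.
Proof.
  intros Hy [Hlt | <-]; [| rewrite f_s; lra].
  pose proof (Xset_s_gap n y Hy Hlt); pose proof (f_ge y Hy); lra.
Qed.

Lemma f_climbs_t n y : X y -> t n <= y -> t (n + 1)%Z <= f y.
Proof.
  intros Hy [Hlt | <-]; [| rewrite f_t; lra].
  pose proof (Xset_t_gap n y Hy Hlt); pose proof (f_ge y Hy); lra.
Qed.

Lemma Xset_limit_shadowing : limit_shadowing_on X f.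
Proof.
  intros x Hx Hpseudo.
  assert (Hb : forall i, 0 <= x i <= 2) by (intros i; apply Xset_bounds, Hx).
  pose proof (eventually_above_all X f x s Hx Hpseudo s_inc Xset_s_gap f_climbs_s) as Hs_all.
  pose proof (eventually_above_all X f x t Hx Hpseudo t_inc Xset_t_gap f_climbs_t) as Ht_all.
  pose proof (eventually_above_or_below X f x s Hx Hpseudo s_inc Xset_s_gap f_climbs_s) as Hs_or.
  pose proof (eventually_above_or_below X f x t Hx Hpseudo t_inc Xset_t_gap f_climbs_t) as Ht_or.
  destruct (classic (exists n, eventually (fun i => t n <= x i))) as [[n1 Ht] | Hnot_t].
  { exists 2; split; [right; right; left; reflexivity |].
    apply fixed_point_limit_shadows; [assumption |]; intros eps Heps.
    destruct (t_lim2 eps Heps) as [N HN]; destruct (Ht_all n1 N Ht) as [M HM].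
    exists M; intros i Hi; specialize (HM i Hi); specialize (HN N (Z.le_refl N)).
    specialize (Hb i); unfold R_dist; Rabs_lra. }
  assert (Hbelow_t : forall n, eventually (fun i => x i < t n)).
  { intros n; destruct (Ht_or n) as [Ht | Ht]; [exfalso; eauto | exact Ht]. }
  destruct (classic (exists n, eventually (fun i => s n <= x i))) as [[n0 Hs] | Hnot_s].
  { exists 1; split; [right; left; reflexivity |].
    apply fixed_point_limit_shadows; [assumption |]; intros eps Heps.
    destruct (s_lim1 eps Heps) as [N1 HN1]; destruct (t_lim1 eps Heps) as [N2 HN2].
    destruct (Hs_all n0 N1 Hs) as [M1 HM1]; destruct (Hbelow_t N2) as [M2 HM2].
    exists (Nat.max M1 M2); intros i Hi.
    specialize (HM1 i ltac:(lia)); specialize (HM2 i ltac:(lia)).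
    specialize (HN1 N1 (Z.le_refl N1)); specialize (HN2 N2 (Z.le_refl N2)).
    unfold R_dist; Rabs_lra. }
  exists 0; split; [left; reflexivity |].
  apply fixed_point_limit_shadows; [assumption |]; intros eps Heps.
  destruct (s_lim0 eps Heps) as [N HN].
  destruct (Hs_or N) as [Hs | [M HM]]; [exfalso; eauto |].
  exists M; intros i Hi; specialize (HM i Hi); specialize (HN N (Z.le_refl N)).
  specialize (Hb i); unfold R_dist; Rabs_lra.
Qed.

Lemma f_below_1 y : X y -> y < 1 -> f y < 1.
Proof.
  intros [-> | [-> | [-> | [[m ->] | [m ->]]]]] Hy; rewrite ?f0, ?f_s; try lra.
  - apply s_bounds.
  - pose proof (t_bounds m); lra.
Qed.

Lemma iter_below_1 y : X y -> y < 1 -> forall i, X (Nat.iter i f y) /\ Nat.iter i f y < 1.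
Proof.
  intros Hy Hy1; induction i as [| i [HXi Hi]]; [now split |].
  split; [apply f_Xset | apply f_below_1]; assumption.
Qed.

Definition s_then_t (b c j : Z) : R :=
  if (j <=? b)%Z then s j else t (c + j - b - 1)%Z.

Lemma s_then_t_Xset b c j : X (s_then_t b c j).
Proof. unfold s_then_t, Xset; destruct (j <=? b)%Z; eauto 6. Qed.

Lemma s_then_t_pseudo_orbit d b c :
  Rabs (s (b + 1)%Z - 1) < d / 2 -> Rabs (t c - 1) < d / 2 ->
  forall j, Rabs (f (s_then_t b c j) - s_then_t b c (j + 1)) <= d.
Proof.
  intros Hs Ht j; unfold s_then_t.
  destruct (Z.leb_spec j b); destruct (Z.leb_spec (j + 1) b); try lia.
  - rewrite f_s; Rabs_lra.
  - replace j with b by lia; replace (c + (b + 1) - b - 1)%Z with c by lia.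
    rewrite f_s; Rabs_lra.
  - rewrite f_t; replace (c + j - b - 1 + 1)%Z with (c + (j + 1) - b - 1)%Z by lia.
    Rabs_lra.
Qed.

Lemma Xset_not_shadowing : ~ shadowing_on X f.
Proof.
  intros Hsh; destruct (Hsh (1 / 4) ltac:(lra)) as [d [Hd Hshd]].
  destruct (s_lim0 (1 / 2) ltac:(lra)) as [a Ha]; specialize (Ha a (Z.le_refl a)).
  destruct (s_lim1 (d / 2) ltac:(lra)) as [B HB].
  destruct (t_lim1 (d / 2) ltac:(lra)) as [c Hc].
  destruct (t_lim2 (1 / 2) ltac:(lra)) as [T HT].
  set (b := Z.max a B).
  set (x := fun i : nat => s_then_t b c (a + Z.of_nat i)).
  destruct (Hshd x) as [y [Hy Hclose]].
  - intros i; apply s_then_t_Xset.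
  - intros i; unfold x; rewrite Nat2Z.inj_succ, <- Z.add_1_r, Z.add_assoc.
    apply s_then_t_pseudo_orbit; [apply HB; lia | apply Hc; lia].
  - assert (Hy1 : y < 1).
    { specialize (Hclose 0%nat); unfold x, s_then_t in Hclose; simpl in Hclose.
      rewrite Z.add_0_r in Hclose; destruct (Z.leb_spec a b); [Rabs_lra | lia]. }
    set (i := Z.to_nat (b - a + 1 + Z.abs (T - c))).
    destruct (iter_below_1 y Hy Hy1 i) as [_ Hiter].
    specialize (Hclose i); unfold x, s_then_t in Hclose.
    destruct (Z.leb_spec (a + Z.of_nat i) b); [lia |].
    specialize (HT (c + (a + Z.of_nat i) - b - 1)%Z ltac:(lia)); Rabs_lra.
Qed.

End Space.

Theorem mainTheorem13 (s t : Z -> R) (f : R -> R) :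
  strictly_increasing_Z s -> strictly_increasing_Z t ->
  lim_Zminus s 0 -> lim_Zplus s 1 -> lim_Zminus t 1 -> lim_Zplus t 2 ->
  f 0 = 0 -> f 1 = 1 -> f 2 = 2 ->
  (forall n : Z, f (s n) = s (n + 1)%Z) ->
  (forall n : Z, f (t n) = t (n + 1)%Z) ->
  is_homeomorphism_on (Xset s t) f /\
  expansive_on (Xset s t) f /\
  limit_shadowing_on (Xset s t) f /\
  ~ shadowing_on (Xset s t) f.
Proof.
  intros.
  split; [| split; [| split]].
  - eapply Xset_homeomorphism; eassumption.
  - eapply Xset_expansive; eassumption.
  - eapply Xset_limit_shadowing; eassumption.
  - eapply Xset_not_shadowing; eassumption.
Qed.
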